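(* For $m,n\ge1$, \[ G^{(1)}_{m,n}=\frac{(-1)^n}{n!}\int_0^1\binom{t}{m}\left[{n\atop 1}\right]_{t-1}dt . \]
   Context: Define $G^{(1)}_{m,n}$ ($m,n\ge0$) by the formal power series $\sum_{m,n\ge0}G^{(1)}_{m,n}x^my^n=\dfrac{y\log(1+x)-x\log(1+y)}{\log(1+x)-\log(1+y)}$. $\binom{t}{m}=t(t-1)\cdots(t-m+1)/m!$. The Stirling polynomials of the first kind $\left[{n\atop m}\right]_x\in\mathbb Z[x]$ ($n\ge m\ge0$) are defined by $\sum_{m=0}^n\left[{n\atop m}\right]_x y^m=(x+y)(x+y+1)\cdots(x+y+n-1)$. *)

From HB Require Import structures.
From mathcomp Require Import all_boot all_order all_algebra.
From mathcomp Require Import all_classical all_reals all_analysis.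
Set Implicit Arguments. Unset Strict Implicit. Unset Printing Implicit Defensive.
Import Order.TTheory GRing.Theory Num.Theory.
Local Open Scope ring_scope.

(* Coefficients of log(1+x) = sum_{k>=1} (-1)^(k+1) x^k / k. *)
Definition logc (R : fieldType) (k : nat) : R :=
  if k == 0%N then 0 else (-1) ^+ k.+1 / k%:R.

(* Coefficient of x^i y^j in D := log(1+x) - log(1+y). *)
Definition Dcoef (R : fieldType) (i j : nat) : R :=
  (if j == 0%N then logc R i else 0) - (if i == 0%N then logc R j else 0).

(* Coefficient of x^i y^j in N := y log(1+x) - x log(1+y). *)
Definition Ncoef (R : fieldType) (i j : nat) : R :=
  (if j == 1%N then logc R i else 0) - (if i == 1%N then logc R j else 0).

(* G (a bivariate formal power series given by its coefficients G i j)
   is the quotient N / D, i.e. G * D = N in R[[x,y]]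
   (R[[x,y]] is an integral domain, so G is unique if it exists). *)
Definition is_G1 (R : fieldType) (G : nat -> nat -> R) : Prop :=
  forall m n : nat,
    \sum_(i < m.+1) \sum_(j < n.+1) G i j * Dcoef R (m - i) (n - j) = Ncoef R m n.

Definition binomR (R : fieldType) (t : R) (m : nat) : R :=
  (\prod_(i < m) (t - i%:R)) / (m`!)%:R.

(* (x+y)(x+y+1)...(x+y+n-1) as a polynomial in y with coefficients in R[x]:
   outer variable = y, inner variable = x. *)
Definition stirling_gen (R : comRingType) (n : nat) : {poly {poly R}} :=
  \prod_(i < n) ('X + ('X + i%:R%:P)%:P).

Definition stirling1_poly (R : comRingType) (n m : nat) : {poly R} :=
  (stirling_gen R n)`_m.

(* Write A_m(t) = binom(t, m) and B_n(t) = binom(1 - t, n).  Differentiating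
   (1 + x)^t = sum_m A_m(t) x^m in t gives A_m' = sum_i [x^(m-i)] log(1 + x) A_i,
   and likewise B_n' = - sum_j [y^(n-j)] log(1 + y) B_j.  By the Leibniz rule the
   convolution of H_(m,n) = int_0^1 A_m B_n' with the coefficients of
   D = log(1 + x) - log(1 + y) is int_0^1 (A_m B_n')', i.e. boundary values of
   A and B' at 0 and 1, and these are the coefficients of N once H is corrected
   by the monomial y.  The quotient N / D is unique since the lowest-degree part
   of D is x - y, and B_n(t) = (-1)^n / n! (t - 1) t ... (t + n - 2) turns H_(m,n)
   into the stated integral of a Stirling polynomial. *)

From HB Require Import structures.
From mathcomp Require Import all_boot all_order all_algebra.
From mathcomp Require Import all_classical all_reals all_analysis.
From mathcomp Require Import ring zify.
Import Order.TTheory GRing.Theory Num.Theory.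
Import numFieldNormedType.Exports.
Set Implicit Arguments. Unset Strict Implicit. Unset Printing Implicit Defensive.
Local Open Scope ring_scope.

Section PolyIntegral.
Variable R : numFieldType.
Implicit Types p q : {poly R}.

Definition poly_int01 p : R := \sum_(i < size p) p`_i / i.+1%:R.

Lemma poly_int01_widen n p : (size p <= n)%N ->
  poly_int01 p = \sum_(i < n) p`_i / i.+1%:R.
Proof.
move=> le_p_n; rewrite /poly_int01 (big_ord_widen n (fun i => p`_i / i.+1%:R)) //.
rewrite big_mkcond /=; apply: eq_bigr => i _.
by case: ltnP => // /(nth_default 0) ->; rewrite mul0r.
Qed.

Lemma poly_int010 : poly_int01 0 = 0.
Proof. by rewrite /poly_int01 size_poly0 big_ord0. Qed.

Lemma poly_int01D p q : poly_int01 (p + q) = poly_int01 p + poly_int01 q.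
Proof.
have le_size : (maxn (size p) (size q) <= size p + size q)%N.
  by rewrite geq_max leq_addr leq_addl.
rewrite (poly_int01_widen (leq_trans (size_polyD _ _) le_size)).
rewrite (@poly_int01_widen _ p (leq_addr (size q) _)).
rewrite (@poly_int01_widen _ q (leq_addl (size p) _)).
by rewrite -big_split; apply: eq_bigr => i _; rewrite coefD mulrDl.
Qed.

Lemma poly_int01Z a p : poly_int01 (a *: p) = a * poly_int01 p.
Proof.
rewrite (@poly_int01_widen (size p)) ?size_scale_leq // mulr_sumr.
by apply: eq_bigr => i _; rewrite coefZ mulrA.
Qed.

Lemma poly_int01_sum (I : Type) (r : seq I) (P : pred I) (F : I -> {poly R}) :
  poly_int01 (\sum_(i <- r | P i) F i) = \sum_(i <- r | P i) poly_int01 (F i).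
Proof. exact: (big_morph _ poly_int01D poly_int010). Qed.

Lemma poly_int01_deriv p : poly_int01 p^`() = p.[1] - p.[0].
Proof.
have [->|p_neq0] := eqVneq p 0; first by rewrite deriv0 poly_int010 !horner0 subr0.
rewrite (poly_int01_widen (ltnW (lt_size_deriv p_neq0))) horner_coef horner_coef0.
case size_p: (size p) => [|s]; first by move/eqP: size_p; rewrite size_poly_eq0 (negPf p_neq0).
rewrite big_ord_recr big_ord_recl /= expr0 mulr1 [RHS]addrC addKr.
rewrite coef_deriv [p`_s.+1]nth_default ?size_p // mul0rn mul0r addr0.
apply: eq_bigr => i _; rewrite coef_deriv -[_ *+ _]mulr_natr mulfK ?pnatr_eq0 //.
by rewrite expr1n mulr1.
Qed.

Definition antideriv p : {poly R} :=
  \poly_(i < (size p).+1) (if i is k.+1 then p`_k / k.+1%:R else 0).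

Lemma antiderivK p : (antideriv p)^`() = p.
Proof.
apply/polyP => i; rewrite coef_deriv coef_poly ltnS.
case: ltnP => [_|le_p_i]; first by rewrite -[_ *+ _]mulr_natr divfK ?pnatr_eq0.
by rewrite nth_default // mul0rn.
Qed.

End PolyIntegral.

Lemma integral01_poly (R : realType) (p : {poly R}) :
  (\int[@lebesgue_measure R]_(t in `[0%R, 1%R]) (p.[t])%:E = (poly_int01 p)%:E)%E.
Proof.
have ftc (q : {poly R}) : (\int[@lebesgue_measure R]_(t in `[0%R, 1%R])
    ((q^`()).[t])%:E = (q.[1] - q.[0])%:E)%E.
  rewrite EFinB (@continuous_FTC2 _ (horner q^`()) (horner q)) //.
  - by apply/continuous_subspaceT => x; exact: continuous_horner.
  - split=> [x _| |].
    + exact: derivable_horner.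
    + by apply: cvg_at_right_filter; exact: continuous_horner.
    + by apply: cvg_at_left_filter; exact: continuous_horner.
  - by move=> x _; rewrite -derivE.
by rewrite -{1}(antiderivK p) ftc -poly_int01_deriv antiderivK.
Qed.

Lemma shift_invariant_polyE (R : numDomainType) (p : {poly R}) :
  p \Po ('X + 1) = p -> p = (p.[0])%:P.
Proof.
move=> p_shift; apply/eqP; rewrite -subr_eq0; apply/eqP.
set q := p - _.
have q_shift : q \Po ('X + 1) = q by rewrite /q linearB /= p_shift comp_polyC.
have q_nat k : q.[k%:R] = 0.
  elim: k => [|k IHk]; first by rewrite /q hornerD hornerN hornerC subrr.
  have -> : q.[k.+1%:R] = (q \Po ('X + 1)).[k%:R].
    by rewrite horner_comp !hornerE natr1.
  by rewrite q_shift.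
apply: (@roots_geq_poly_eq0 _ _ [seq k%:R | k <- iota 0 (size q)]).
- by apply/allP => x /mapP [k _ ->]; rewrite /root q_nat.
- by rewrite map_inj_uniq ?iota_uniq // => a b /eqP; rewrite eqr_nat => /eqP.
- by rewrite size_map size_iota.
Qed.

Section BinomialPolynomials.
Variable R : numFieldType.

Definition binom_poly (m : nat) : {poly R} :=
  (m`!%:R)^-1 *: \prod_(i < m) ('X - i%:R%:P).

Lemma horner_binom_poly t m : (binom_poly m).[t] = binomR t m.
Proof.
rewrite /binom_poly hornerZ horner_prod /binomR mulrC; congr (_ * _).
by apply: eq_bigr => i _; rewrite hornerXsubC.
Qed.

Lemma binom_poly0 : binom_poly 0 = 1.
Proof. by rewrite /binom_poly big_ord0 fact0 invr1 scale1r. Qed.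

Lemma binom_poly_at0 m : (binom_poly m).[0] = (m == 0)%:R.
Proof.
case: m => [|m]; first by rewrite binom_poly0 hornerC.
by rewrite hornerZ horner_prod big_ord_recl /= hornerXsubC subrr mul0r mulr0.
Qed.

Lemma binom_poly_at1 m : (binom_poly m).[1] = (m <= 1)%N%:R.
Proof.
case: m => [|[|m]]; first by rewrite binom_poly0 hornerC.
  by rewrite hornerZ horner_prod big_ord1 hornerXsubC subr0 invr1 mulr1.
rewrite hornerZ horner_prod big_ord_recl big_ord_recl /= !hornerXsubC.
by rewrite subrr mul0r mulr0 mulr0.
Qed.

Lemma deriv_binom_poly_at0 m : ((binom_poly m.+1)^`()).[0] = logc R m.+1.
Proof.
rewrite /binom_poly derivZ hornerZ big_ord_recl /= derivM derivXsubC mul1r.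
rewrite hornerD hornerM hornerXsubC subrr mul0r addr0 horner_prod.
under eq_bigr do rewrite hornerXsubC sub0r /bump /= add1n.
rewrite prodrN card_ord.
have -> : \prod_(i < m) (i.+1%:R : R) = m`!%:R.
  by rewrite fact_prod big_add1 /= big_mkord natr_prod.
rewrite /logc /= factS natrM invfM !exprS !mulN1r opprK.
by field; rewrite addrC natr1 !pnatr_eq0 /= -lt0n fact_gt0.
Qed.

Lemma binom_poly_shift m :
  binom_poly m.+1 \Po ('X + 1) = binom_poly m.+1 + binom_poly m.
Proof.
rewrite /binom_poly linearZ /= rmorph_prod /= big_ord_recl /= big_ord_recr /=.
set P := \prod_(i < m) ('X - i%:R%:P).
have -> : \prod_(i < m) (('X - (bump 0 i)%:R%:P) \Po ('X + 1)) = P.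
  apply: eq_bigr => i _; rewrite comp_polyB comp_polyX comp_polyC /bump /=.
  rewrite -natr1 rmorphD rmorph1 /=; ring.
rewrite comp_polyB comp_polyX comp_polyC subr0.
have -> : P * ('X - m%:R%:P) = ('X + 1) * P - m.+1%:R%:P * P.
  rewrite -natr1 rmorphD rmorph1 /=; ring.
rewrite scalerBr -addrA [X in _ = _ + X](_ : _ = 0) ?addr0 //.
rewrite mul_polyC scalerA factS natrM invfM mulrAC mulVf ?pnatr_eq0 //.
by rewrite mul1r addNr.
Qed.

Definition log_binom_poly (m : nat) : {poly R} :=
  \sum_(i < m.+1) logc R (m - i) *: binom_poly i.

Lemma log_binom_polyS m :
  log_binom_poly m.+1 = logc R m.+1 *: 1 + \sum_(i < m.+1) logc R (m - i) *: binom_poly i.+1.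
Proof. by rewrite /log_binom_poly big_ord_recl /= binom_poly0 subn0. Qed.

Lemma log_binom_poly_shift m :
  log_binom_poly m.+1 \Po ('X + 1) = log_binom_poly m.+1 + log_binom_poly m.
Proof.
rewrite log_binom_polyS linearD /= linearZ /= comp_polyC linear_sum /=.
under eq_bigr do rewrite linearZ /= binom_poly_shift scalerDr.
by rewrite big_split /= addrA.
Qed.

Lemma deriv_binom_poly m : (binom_poly m)^`() = log_binom_poly m.
Proof.
(* Both sides satisfy the Pascal rule under t |-> t + 1 and agree at t = 0. *)
elim: m => [|m IHm].
  by rewrite binom_poly0 /log_binom_poly big_ord1 /logc /= scale0r derivC.
set E := (binom_poly m.+1)^`() - log_binom_poly m.+1.
have E_shift : E \Po ('X + 1) = E.
  have deriv_shift (p : {poly R}) : p^`() \Po ('X + 1) = (p \Po ('X + 1))^`().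
    by rewrite deriv_comp derivD derivX derivC addr0 mulr1.
  rewrite linearB /= deriv_shift binom_poly_shift derivD IHm log_binom_poly_shift.
  by rewrite opprD addrACA subrr addr0.
have E_at0 : E.[0] = 0.
  rewrite hornerD hornerN deriv_binom_poly_at0 log_binom_polyS hornerD hornerZ.
  rewrite hornerC mulr1 horner_sum big1 ?addr0 ?subrr // => i _.
  by rewrite hornerZ binom_poly_at0 mulr0.
by apply/eqP; rewrite -subr_eq0 -/E (shift_invariant_polyE E_shift) E_at0.
Qed.

End BinomialPolynomials.

Section RisingFactorial.
Variable R : comNzRingType.

Definition rising_poly (n : nat) : {poly R} := \prod_(i < n) ('X + i%:R%:P).

Lemma stirling1_poly1 n : stirling1_poly R n 1 = (rising_poly n)^`().
Proof.
rewrite /stirling1_poly.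
suff [] : (stirling_gen R n)`_0 = rising_poly n /\
          (stirling_gen R n)`_1 = (rising_poly n)^`() by [].
elim: n => [|n [IH0 IH1]].
  by rewrite /stirling_gen /rising_poly !big_ord0 !coefC derivC.
rewrite /stirling_gen /rising_poly !big_ord_recr /= -/(stirling_gen R n).
rewrite -/(rising_poly n) !mulrDr !coefD !coefMX !coefMC /= IH0 IH1 add0r.
rewrite -mulrDr; split=> //.
by rewrite derivM derivD derivX derivC addr0 mulr1 addrC.
Qed.

End RisingFactorial.

Section FlippedBinomialPolynomials.
Variable R : numFieldType.

Definition binom_poly_flip (n : nat) : {poly R} := binom_poly R n \Po (1 - 'X).

Lemma binom_poly_flipE n :
  binom_poly_flip n = ((-1) ^+ n / n`!%:R) *: (rising_poly R n \Po ('X - 1)).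
Proof.
rewrite /binom_poly_flip /binom_poly /rising_poly linearZ /= !rmorph_prod /=.
rewrite mulrC -scalerA; congr (_ *: _).
rewrite -mul_polyC rmorph_sign.
have -> : (-1) ^+ n = (-1) ^+ #|'I_n| :> {poly R} by rewrite card_ord.
rewrite -prodrN; apply: eq_bigr => i _.
rewrite comp_polyB comp_polyD !comp_polyX !comp_polyC; ring.
Qed.

Lemma deriv_binom_poly_flip n :
  (binom_poly_flip n)^`() = - \sum_(j < n.+1) logc R (n - j) *: binom_poly_flip j.
Proof.
rewrite deriv_comp derivB derivC derivX sub0r mulrN1 deriv_binom_poly.
by rewrite linear_sum; congr (- _); apply: eq_bigr => j _; rewrite linearZ.
Qed.

Lemma binom_poly_flip_at1 n : (binom_poly_flip n).[1] = (n == 0)%:R.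
Proof.
by rewrite horner_comp hornerD hornerN hornerX hornerC subrr binom_poly_at0.
Qed.

Lemma binom_poly_flip_at0 n : (binom_poly_flip n).[0] = (n <= 1)%N%:R.
Proof.
by rewrite horner_comp hornerD hornerN hornerX hornerC subr0 binom_poly_at1.
Qed.

Lemma deriv_binom_poly_flip_at1 n : ((binom_poly_flip n)^`()).[1] = - logc R n.
Proof.
rewrite deriv_binom_poly_flip hornerN horner_sum big_ord_recl /= hornerZ.
rewrite binom_poly_flip_at1 mulr1 subn0 big1 ?addr0 // => i _.
by rewrite hornerZ binom_poly_flip_at1 mulr0.
Qed.

Lemma deriv_binom_poly_flip_at0 n :
  ((binom_poly_flip n)^`()).[0] = - (logc R n + logc R n.-1).
Proof.
rewrite deriv_binom_poly_flip hornerN horner_sum; congr (- _).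
case: n => [|n]; first by rewrite big_ord1 hornerZ binom_poly_flip_at0 mulr1 /logc addr0.
rewrite big_ord_recl big_ord_recl /= !hornerZ !binom_poly_flip_at0 !mulr1 subn0 subn1.
by rewrite big1 ?addr0 // => i _; rewrite hornerZ binom_poly_flip_at0 mulr0.
Qed.

End FlippedBinomialPolynomials.

Lemma sum_ord_delta (V : zmodType) (n k : nat) (F : nat -> V) :
  \sum_(i < n) (if i == k :> nat then F i else 0) = if (k < n)%N then F k else 0.
Proof. by rewrite -big_mkcond big_ord1_eq. Qed.

Lemma sum_ord_delta2 (V : zmodType) (K M a b : nat) (F : nat -> nat -> V) :
  \sum_(i < K) \sum_(j < M) (if (i == a :> nat) && (j == b :> nat) then F i j else 0) =
  if (a < K)%N && (b < M)%N then F a b else 0.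
Proof.
rewrite (eq_bigr (fun i : 'I_K => if i == a :> nat then
    (if (b < M)%N then F i b else 0) else 0)) => [|i _].
  by rewrite (@sum_ord_delta V K a (fun i => if (b < M)%N then F i b else 0)); case: (a < K)%N.
by case: (i == a :> nat); [exact: (@sum_ord_delta V M b (F i)) | rewrite big1].
Qed.

Lemma sum_ord_last (R : pzRingType) (V : lmodType R) n (x : R) (F : nat -> V) :
  \sum_(j < n.+1) (if (n - j == 0)%N then x else 0) *: F j = x *: F n.
Proof.
rewrite big_ord_recr /= subnn eqxx big1 ?add0r // => j _.
by rewrite subn_eq0 leqNgt ltn_ord scale0r.
Qed.

Section LogQuotient.
Variable R : fieldType.
Implicit Types E G : nat -> nat -> R.

Definition Dconv E m n : R :=
  \sum_(i < m.+1) \sum_(j < n.+1) E i j * Dcoef R (m - i) (n - j).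

Lemma DconvD E E' m n :
  Dconv (fun i j => E i j + E' i j) m n = Dconv E m n + Dconv E' m n.
Proof.
rewrite /Dconv -big_split; apply: eq_bigr => i _.
by rewrite -big_split; apply: eq_bigr => j _; rewrite mulrDl.
Qed.

Lemma DconvB E E' m n :
  Dconv (fun i j => E i j - E' i j) m n = Dconv E m n - Dconv E' m n.
Proof.
rewrite /Dconv -sumrB; apply: eq_bigr => i _.
by rewrite -sumrB; apply: eq_bigr => j _; rewrite mulrBl.
Qed.

Lemma logc1 : logc R 1 = 1.
Proof. by rewrite /logc /= expr2 mulN1r opprK divr1. Qed.

Lemma Dcoef_small a b : (a + b <= 1)%N ->
  Dcoef R a b = ((a == 1) && (b == 0))%:R - ((a == 0) && (b == 1))%:R.
Proof. by case: a b => [|[|?]] [|[|?]] //; rewrite /Dcoef /= ?logc1 ?subr0 ?sub0r. Qed.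

(* If E vanishes below total degree d, only the lowest part x - y of D meets
   the degree-d part of E in degree d + 1. *)
Lemma Dconv_lowest E d a b :
  (forall i j, (i + j < d)%N -> E i j = 0) -> (a + b = d.+1)%N ->
  Dconv E a b = (if a is a'.+1 then E a' b else 0) - (if b is b'.+1 then E a b' else 0).
Proof.
move=> E_low ab_d.
have term (i : 'I_a.+1) (j : 'I_b.+1) : E i j * Dcoef R (a - i) (b - j) =
    (if (i.+1 == a) && (j == b :> nat) then E i j else 0) -
    (if (i == a :> nat) && (j.+1 == b) then E i j else 0).
  have [ij_lt|ij_ge] := ltnP (i + j) d; first by rewrite E_low // mul0r !if_same subrr.
  have i_le := ltn_ord i; have j_le := ltn_ord j.
  rewrite Dcoef_small; last lia.
  rewrite (_ : (a - i == 1)%N && (b - j == 0)%N = (i.+1 == a) && (j == b :> nat)); last first.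
    by apply/idP/idP; lia.
  rewrite (_ : (a - i == 0)%N && (b - j == 1)%N = (i == a :> nat) && (j.+1 == b)); last first.
    by apply/idP/idP; lia.
  by rewrite mulrBr; do 2 case: (_ && _); rewrite ?(mulr1, mulr0, subr0, sub0r).
rewrite /Dconv.
under eq_bigr => i _ do under eq_bigr => j _ do rewrite term.
under eq_bigr do rewrite sumrB.
rewrite sumrB; congr (_ - _).
- case: a {term ab_d} => [|a]; first by rewrite big1 // => i _; rewrite big1.
  by have := sum_ord_delta2 a.+2 b.+1 a b E; rewrite ltnS leqnSn ltnS leqnn /= => <-.
- case: b {term ab_d} => [|b].
    by rewrite big1 // => i _; rewrite big1 // => j _; rewrite andbF.
  by have := sum_ord_delta2 a.+1 b.+2 a b E; rewrite ltnS leqnn ltnS leqnSn /= => <-.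
Qed.

Lemma Dconv_eq0 E : (forall m n, Dconv E m n = 0) -> forall i j, E i j = 0.
Proof.
move=> E_Dconv.
suff E_diag d k : (k <= d)%N -> E k (d - k)%N = 0.
  by move=> i j; have := E_diag (i + j)%N i (leq_addr _ _); rewrite addKn.
elim/ltn_ind: d k => d IHd.
have E_low i j : (i + j < d)%N -> E i j = 0.
  by move=> lt_ij_d; have := IHd _ lt_ij_d i (leq_addr _ _); rewrite addKn.
have E_step a b : (a + b = d.+1)%N ->
    (if a is a'.+1 then E a' b else 0) = (if b is b'.+1 then E a b' else 0).
  by move/(Dconv_lowest E_low); rewrite E_Dconv => /eqP; rewrite eq_sym subr_eq0 => /eqP.
elim=> [|k IHk] le_k_d.
  by have := E_step 0%N d.+1 (add0n _); rewrite subn0.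
have le_k_d' := ltnW le_k_d.
have := E_step k.+1 (d - k)%N; rewrite addSn subnKC // => /(_ erefl).
by rewrite IHk // -(subnSK le_k_d) => /esym.
Qed.

Lemma is_G1_unique G G' : is_G1 G -> is_G1 G' -> forall i j, G i j = G' i j.
Proof.
move=> G_G1 G'_G1 i j; apply/eqP; rewrite -subr_eq0; apply/eqP; move: i j.
apply: Dconv_eq0 => m n.
by rewrite DconvB (G_G1 m n : Dconv G m n = _) (G'_G1 m n : Dconv G' m n = _) subrr.
Qed.

End LogQuotient.

Section IntegralSolution.
Variable R : numFieldType.

Lemma Dcoef_binom_prod m n :
  \sum_(i < m.+1) \sum_(j < n.+1)
      Dcoef R (m - i) (n - j) *: (binom_poly R i * (binom_poly_flip R j)^`())
  = (binom_poly R m * (binom_poly_flip R n)^`())^`().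
Proof.
set A := binom_poly R; set B := fun j => (binom_poly_flip R j)^`().
have split_Dcoef (i : 'I_m.+1) :
    \sum_(j < n.+1) Dcoef R (m - i) (n - j) *: (A i * B j) =
    logc R (m - i) *: (A i * B n) -
    \sum_(j < n.+1) (if (m - i == 0)%N then logc R (n - j) else 0) *: (A i * B j).
  under eq_bigr do rewrite scalerBl.
  by rewrite sumrB (sum_ord_last n _ (fun j => A i * B j)).
rewrite (eq_bigr _ (fun i _ => split_Dcoef i)) sumrB exchange_big /=.
under [X in _ - X]eq_bigr do rewrite (sum_ord_last m _ (fun i => A i * B _)).
under eq_bigr do rewrite scalerAl.
under [X in _ - X]eq_bigr do rewrite scalerAr.
rewrite -mulr_suml -mulr_sumr.
have -> : \sum_(i < m.+1) logc R (m - i) *: A i = (A m)^`() by rewrite deriv_binom_poly.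
have -> : \sum_(j < n.+1) logc R (n - j) *: B j = - (B n)^`().
  rewrite /B deriv_binom_poly_flip derivN opprK linear_sum /=.
  by apply: eq_bigr => j _; rewrite derivZ.
by rewrite derivM mulrN opprK.
Qed.

Definition G1_int m n : R := poly_int01 (binom_poly R m * (binom_poly_flip R n)^`()).

Lemma Dconv_G1_int m n :
  Dconv G1_int m n = - (m <= 1)%N%:R * logc R n + (m == 0)%:R * (logc R n + logc R n.-1).
Proof.
transitivity (poly_int01 (\sum_(i < m.+1) \sum_(j < n.+1)
    Dcoef R (m - i) (n - j) *: (binom_poly R i * (binom_poly_flip R j)^`()))).
  rewrite poly_int01_sum; apply: eq_bigr => i _.
  by rewrite poly_int01_sum; apply: eq_bigr => j _; rewrite poly_int01Z mulrC.
rewrite Dcoef_binom_prod poly_int01_deriv !hornerM binom_poly_at1 binom_poly_at0.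
by rewrite deriv_binom_poly_flip_at1 deriv_binom_poly_flip_at0 mulrN mulNr mulrN opprK.
Qed.

Lemma Dconv_delta01 m n :
  Dconv (fun i j => ((i == 0) && (j == 1))%:R) m n = if n is n'.+1 then Dcoef R m n' else 0.
Proof.
rewrite /Dconv; under eq_bigr do under eq_bigr do rewrite mulr_natl mulrb.
rewrite (sum_ord_delta2 m.+1 n.+1 0 1 (fun i j => Dcoef R (m - i) (n - j))) /= subn0.
by case: n => [|n]; rewrite ?subSS ?subn0.
Qed.

Definition G1_sol m n : R := G1_int m n + ((m == 0) && (n == 1))%:R.

Lemma G1_sol_is_G1 : is_G1 G1_sol.
Proof.
move=> m n; rewrite -/(Dconv G1_sol m n) DconvD Dconv_G1_int Dconv_delta01.
by case: n => [|[|n]]; case: m => [|[|m]]; rewrite /Dcoef /Ncoef /= ?logc1 -?[logc R 0]/(0 : R); ring.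
Qed.

End IntegralSolution.

Theorem proposition5p4 (R : realType) :
  (exists G : nat -> nat -> R, is_G1 G) /\
  forall (G : nat -> nat -> R), is_G1 G ->
  forall m n : nat, (1 <= m)%N -> (1 <= n)%N ->
    ((G m n)%:E =
     ((-1) ^+ n / (n`!)%:R)%:E *
       \int[@lebesgue_measure R]_(t in `[0%R, 1%R])
          (binomR t m * (stirling1_poly R n 1).[t - 1])%:E)%E.
Proof.
split=> [|G G_G1 m n m_gt0 _]; first by exists (G1_sol R); exact: G1_sol_is_G1.
have -> : G m n = G1_int R m n.
  by rewrite (is_G1_unique G_G1 (G1_sol_is_G1 R)) /G1_sol; case: m m_gt0 => // m; rewrite addr0.
set Q := binom_poly R m * ((rising_poly R n)^`() \Po ('X - 1)).
have -> : (\int[@lebesgue_measure R]_(t in `[0%R, 1%R])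
      (binomR t m * (stirling1_poly R n 1).[t - 1])%:E =
    \int[@lebesgue_measure R]_(t in `[0%R, 1%R]) (Q.[t])%:E)%E.
  apply: eq_integral => t _; congr EFin.
  by rewrite hornerM horner_binom_poly horner_comp stirling1_poly1 !hornerE.
rewrite integral01_poly -EFinM /G1_int binom_poly_flipE derivZ -scalerAr poly_int01Z.
by rewrite deriv_comp derivB derivX derivC subr0 mulr1.
Qed.
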